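(* Let $n\ge 2$, $\gamma\in\,]0,1]$, and let $\varphi:\mathbb{R}^{n-1}\to\mathbb{R}$ be Hölder continuous with exponent $\gamma$, i.e. $|\varphi(\bar x)-\varphi(\bar y)|\le M|\bar x-\bar y|^{\gamma}$ for all $\bar x,\bar y\in\mathbb{R}^{n-1}$ and some $M\ge 0$; let $\mathrm{Lip}_\gamma\varphi$ denote the best such constant $M$. Let $$\Omega=\{x=(\bar x,x_n)\in\mathbb{R}^n:\ x_n<\varphi(\bar x)\}.$$ Then for all $x\in\overline{\Omega}$ and all $h>0$, $$C_\gamma(x,h,\mathrm{Lip}_\gamma\varphi)\subset\Omega .$$ Moreover, there exists $c>0$ depending only on $n$, $\gamma$ and $\mathrm{Lip}_\gamma\varphi$ such that $$|B_\gamma(x,r)\cap\Omega|\ge c\, r^{n_\gamma}\qquad\text{for all } x\in\overline{\Omega}\text{ and all } r>0 .$$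
   Context: Points of $\mathbb{R}^n$ are written $x=(\bar x,x_n)$ with $\bar x\in\mathbb{R}^{n-1}$, $x_n\in\mathbb{R}$. For $\gamma\in\,]0,1]$, $\delta_\gamma(x,y)=\max\{|\bar x-\bar y|^\gamma,|x_n-y_n|\}$ and $B_\gamma(x,r)=\{y\in\mathbb{R}^n:\delta_\gamma(x,y)<r\}=\{y:\ |\bar x-\bar y|<r^{1/\gamma},\ |x_n-y_n|<r\}$. Set $n_\gamma=\frac{n-1}{\gamma}+1$. For $x\in\mathbb{R}^n$, $h>0$, $M\ge0$, the cusp with exponent $\gamma$, vertex $x$, height $h$ and opening $M$ is $C_\gamma(x,h,M)=\{y\in\mathbb{R}^n:\ x_n-h<y_n<x_n-M|\bar y-\bar x|^\gamma\}$. $|\cdot|$ of a set denotes Lebesgue measure. *)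

From HB Require Import structures.
From mathcomp Require Import all_boot all_order all_algebra.
From mathcomp Require Import all_classical all_reals all_analysis.
Set Implicit Arguments. Unset Strict Implicit. Unset Printing Implicit Defensive.
Import Order.TTheory GRing.Theory Num.Theory.
Import numFieldNormedType.Exports.
Local Open Scope classical_set_scope.
Local Open Scope ring_scope.

(* Points of R^n, n = m.+1, are pairs (xbar, x_n) with xbar : 'rV[R]_m
   (i.e. R^(n-1)) and x_n : R.  The topology is the product topology. *)
Notation pt R m := (('rV[R]_m * R)%type).

Section Defs.
Variables (R : realType) (m : nat).

Definition enorm (v : 'rV[R]_m) : R := Num.sqrt (\sum_(i < m) (v 0 i) ^+ 2).

Definition holder_with (g M : R) (phi : 'rV[R]_m -> R) : Prop :=
  forall xb yb : 'rV[R]_m, `|phi xb - phi yb| <= M * powR (enorm (xb - yb)) g.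

Definition is_holder (g : R) (phi : 'rV[R]_m -> R) : Prop :=
  exists M, 0 <= M /\ holder_with g M phi.

Definition Lip (g : R) (phi : 'rV[R]_m -> R) : R :=
  inf [set M : R | 0 <= M /\ holder_with g M phi].

Definition Omega (phi : 'rV[R]_m -> R) : set (pt R m) :=
  [set x | x.2 < phi x.1].

Definition Bg (g : R) (x : pt R m) (r : R) : set (pt R m) :=
  [set y | powR (enorm (x.1 - y.1)) g < r /\ `|x.2 - y.2| < r].

Definition cusp (g : R) (x : pt R m) (h M : R) : set (pt R m) :=
  [set y | x.2 - h < y.2 /\ y.2 < x.2 - M * powR (enorm (y.1 - x.1)) g].

(* Lebesgue (outer) measure on R^n = R^(n-1) x R, via countable covers by
   half-open boxes [a, b[. *)
Definition box (a b : pt R m) : set (pt R m) :=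
  [set x : pt R m | (forall i, a.1 0 i <= x.1 0 i < b.1 0 i) /\ a.2 <= x.2 < b.2].

Definition box_vol (a b : pt R m) : R :=
  (\prod_(i < m) Num.max 0 (b.1 0 i - a.1 0 i)) * Num.max 0 (b.2 - a.2).

Definition leb (A : set (pt R m)) : \bar R :=
  ereal_inf [set s : \bar R | exists a b : nat -> pt R m,
     A `<=` \bigcup_k box (a k) (b k) /\
     s = (\sum_(0 <= k <oo) (box_vol (a k) (b k))%:E)%E].

End Defs.

From HB Require Import structures.
From mathcomp Require Import all_boot all_order all_algebra.
From mathcomp Require Import all_classical all_reals all_analysis.
From mathcomp Require Import measurable_realfun lra ring.
Set Implicit Arguments. Unset Strict Implicit. Unset Printing Implicit Defensive.
Import Order.TTheory GRing.Theory Num.Theory.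
Import numFieldNormedType.Exports.
Local Open Scope classical_set_scope.
Local Open Scope ring_scope.

(* Since phi is Hoelder, the closure of Omega lies below the graph of phi, and
   for such x every point y of the cusp satisfies
   y_n < x_n - L |ybar - xbar|^g <= phi xbar - L |ybar - xbar|^g <= phi ybar.
   For the measure bound take rho = r / (4 (L + 1)), so that L rho <= r/4 and
   rho <= r/4.  The box with base the cube of half-side rho^(1/g) / (m+1)
   around xbar (on which |ybar - xbar|^g < rho) and heights in
   [x_n - r/2, x_n - r/4[ lies in the cusp C_g(x, r, L) and in B_g(x, r), and
   its volume is c r^(m/g + 1).  As Lebesgue outer measure is defined through
   countable box covers, it remains to show that the volume of a box never
   exceeds the total volume of a cover; this is done by integrating indicator
   functions one coordinate at a time against Lebesgue measure on the line. *)

Section interval_covers.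
Variable R : realType.
Local Open Scope ereal_scope.

Lemma indic_itvco (a b t : R) : \1_`[a, b[ t = (a <= t < b)%R%:R :> R.
Proof. by rewrite indicE mem_setE in_itv. Qed.

Lemma measurable_scaled_indic_itvco (C a b : R) :
  measurable_fun setT (fun t : R => (C * \1_`[a, b[ t)%:E).
Proof. by apply/measurable_EFinP; apply: measurable_funM. Qed.

Lemma integral_scaled_indic_itvco (C a b : R) : (0 <= C)%R ->
  \int[@lebesgue_measure R]_(t in setT) (C * \1_`[a, b[ t)%:E =
  (C * Num.max 0 (b - a))%:E.
Proof.
move=> C0.
have /= -> := @integralZl_indic _ _ _ (@lebesgue_measure R) setT measurableT
  (fun=> `[a, b[%classic) C.
- rewrite integral_indic // setIT.
  have /= -> := lebesgue_measure_itv `[a, b[; rewrite lte_fin.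
  have [ab|ba] := ltP a b; first by rewrite -EFinB -EFinM max_r // subr_ge0 ltW.
  by rewrite max_l ?mulr0 ?subr_le0 ?mule0.
- by move=> /(le_lt_trans C0); rewrite ltxx.
- exact: measurable_itv.
Qed.

Lemma weighted_itvco_cover_le (C a b : R) (W A B : nat -> R) :
  (0 <= C)%R -> (forall j, 0 <= W j)%R ->
  (forall t, (C * \1_`[a, b[ t)%:E <=
             \sum_(0 <= j <oo) (W j * \1_`[A j, B j[ t)%:E) ->
  (C * Num.max 0 (b - a))%:E <= \sum_(0 <= j <oo) (W j * Num.max 0 (B j - A j))%:E.
Proof.
move=> C0 W0 cover.
rewrite -integral_scaled_indic_itvco //.
under eq_eseriesr do rewrite -integral_scaled_indic_itvco //.
rewrite -integral_nneseries //; last first.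
- by move=> j t _; rewrite lee_fin mulr_ge0.
- by move=> j; exact: measurable_scaled_indic_itvco.
apply: ge0_le_integral => //.
- by move=> t _; rewrite lee_fin mulr_ge0.
- exact: measurable_scaled_indic_itvco.
- apply: ge0_emeasurable_sum => [j t _ _|j _].
    by rewrite lee_fin mulr_ge0.
  exact: measurable_scaled_indic_itvco.
Qed.

End interval_covers.

Lemma nneseries_term_le (R : realType) (u : nat -> \bar R) k :
  (forall n, 0 <= u n)%E -> (u k <= \sum_(0 <= i <oo) u i)%E.
Proof.
move=> u0; apply: le_trans (nneseries_lim_ge k.+1 (fun n _ _ => u0 n)).
by rewrite big_nat_recr //= lee_paddl // sume_ge0.
Qed.

Lemma indic_le_cover (R : realType) (T : Type) (A : set T) (B : nat -> set T)
    (y : T) :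
  A `<=` \bigcup_k B k ->
  ((\1_A y : R)%:E <= \sum_(0 <= k <oo) (\1_(B k) y : R)%:E)%E.
Proof.
move=> AB; have [Ay|nAy] := boolP (y \in A); last first.
  by rewrite indicE (negbTE nAy) nneseries_ge0 // => k _ _; rewrite lee_fin.
have [k _ Bky] := AB y (set_mem Ay).
apply: le_trans (nneseries_term_le k _); last by move=> n; rewrite lee_fin.
by rewrite !indicE Ay mem_set.
Qed.

Section rectangle_covers.
Variables (R : realType) (m : nat).
Local Open Scope ereal_scope.

Definition rect_indic (k : nat) (a b x : 'rV[R]_m) : R :=
  \prod_(i < m | (i < k)%N) \1_`[a ord0 i, b ord0 i[ (x ord0 i).

Definition rect_vol (k : nat) (a b : 'rV[R]_m) : R :=
  \prod_(i < m | (i < k)%N) Num.max 0 (b ord0 i - a ord0 i).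

Lemma prod_ord_ltS k (km : (k < m)%N) (F : 'I_m -> R) :
  (\prod_(i < m | (i < k.+1)%N) F i =
   (\prod_(i < m | (i < k)%N) F i) * F (Ordinal km))%R.
Proof.
rewrite (bigD1 (Ordinal km)) //= mulrC; congr (_ * _)%R.
by apply: eq_bigl => i; rewrite ltnS ltn_neqAle andbC -val_eqE.
Qed.

Lemma rect_indic_ge0 k a b x : (0 <= rect_indic k a b x)%R.
Proof. by apply: prodr_ge0 => i _; rewrite indicE. Qed.

Lemma rect_indic_ltS k (km : (k < m)%N) (a b x : 'rV[R]_m) (t : R) :
  let i0 := Ordinal km in
  rect_indic k.+1 a b (\row_i (if i == i0 then t else x ord0 i)) =
  (rect_indic k a b x * \1_`[a ord0 i0, b ord0 i0[ t)%R.
Proof.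
rewrite /rect_indic prod_ord_ltS mxE eqxx; congr (_ * _)%R.
apply: eq_bigr => i ik; rewrite mxE; case: eqP => // ie.
by move: ik; rewrite ie /= ltnn.
Qed.

(* The weights let the induction absorb the side in coordinate k into c and w. *)
Lemma weighted_rect_cover_le k (c : R) (w : nat -> R) (a b : 'rV[R]_m)
    (A B : nat -> 'rV[R]_m) :
  (k <= m)%N -> (0 <= c)%R -> (forall j, 0 <= w j)%R ->
  (forall x, (c * rect_indic k a b x)%:E <=
             \sum_(0 <= j <oo) (w j * rect_indic k (A j) (B j) x)%:E) ->
  (c * rect_vol k a b)%:E <= \sum_(0 <= j <oo) (w j * rect_vol k (A j) (B j))%:E.
Proof.
elim: k c w => [|k IH] c w km c0 w0 cover.
  have empty (F : 'I_m -> R) : (\prod_(i < m | (i < 0)%N) F i = 1)%R.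
    by rewrite big_pred0.
  have := cover 0%R; rewrite /rect_indic /rect_vol !empty.
  by rewrite !(eq_eseriesr (fun j _ => congr1 (fun z => (w j * z)%:E) (empty _))).
set i0 := Ordinal km.
have side_ge0 (u v : 'rV[R]_m) : (0 <= Num.max 0 (v ord0 i0 - u ord0 i0))%R.
  by rewrite le_max lexx.
rewrite /rect_vol prod_ord_ltS -/i0 mulrA mulrAC.
under eq_eseriesr do rewrite prod_ord_ltS -/i0 mulrA mulrAC.
apply: (IH _ (fun j => w j * Num.max 0 (B j ord0 i0 - A j ord0 i0))%R (ltnW km))
  => [|j|x]; rewrite ?mulr_ge0 //.
rewrite mulrAC; under eq_eseriesr do rewrite mulrAC.
apply: weighted_itvco_cover_le (mulr_ge0 c0 (rect_indic_ge0 _ _ _ _))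
  (fun j => mulr_ge0 (w0 j) (rect_indic_ge0 _ _ _ _)) _ => t.
have := cover (\row_i (if i == i0 then t else x ord0 i)).
rewrite rect_indic_ltS mulrA.
by under [in X in X -> _]eq_eseriesr do rewrite rect_indic_ltS mulrA.
Qed.

End rectangle_covers.

Section box_covers.
Variables (R : realType) (m : nat).
Local Open Scope ereal_scope.

Lemma indic_box (a b y : pt R m) :
  \1_(box a b) y = (rect_indic m a.1 b.1 y.1 * \1_`[a.2, b.2[ y.2)%R.
Proof.
rewrite /rect_indic !indic_itvco.
have [/forallP y1|/forallPn [i yi]] :=
  boolP [forall i, a.1 ord0 i <= y.1 ord0 i < b.1 ord0 i]%R.
  rewrite big1 ?mul1r => [|i _]; last by rewrite indic_itvco y1.
  rewrite indicE; congr (nat_of_bool _)%:R; apply/idP/idP => [/set_mem [_ ->] //|y2].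
  by apply/mem_set; split=> //; apply: y1.
rewrite (bigD1 i) ?ltn_ord //= indic_itvco (negbTE yi) !mul0r indicE.
apply/eqP; rewrite pnatr_eq0 eqb0.
by apply/negP => /set_mem [/(_ i)]; rewrite (negbTE yi).
Qed.

Lemma box_vol_le_cover (a b : pt R m) (A B : nat -> pt R m) :
  box a b `<=` \bigcup_k box (A k) (B k) ->
  (box_vol a b)%:E <= \sum_(0 <= k <oo) (box_vol (A k) (B k))%:E.
Proof.
move=> cover.
have vol_rect (u v : pt R m) :
    box_vol u v = (Num.max 0 (v.2 - u.2) * rect_vol m u.1 v.1)%R.
  rewrite /box_vol /rect_vol mulrC; congr (_ * _)%R.
  by apply: eq_bigl => i; rewrite ltn_ord.
rewrite vol_rect; under eq_eseriesr do rewrite vol_rect.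
apply: weighted_rect_cover_le => // [|j|x]; rewrite ?le_max ?lexx //.
rewrite mulrC; under eq_eseriesr do rewrite mulrC.
apply: weighted_itvco_cover_le => [|j|t]; rewrite ?rect_indic_ge0 //.
have /= := indic_le_cover R (x, t) cover.
by rewrite indic_box; under eq_eseriesr do rewrite indic_box.
Qed.

End box_covers.

Section holder_geometry.
Variables (R : realType) (m : nat).

Lemma enorm_ge0 (v : 'rV[R]_m) : 0 <= enorm v.
Proof. exact: sqrtr_ge0. Qed.

Lemma enormB (u v : 'rV[R]_m) : enorm (u - v) = enorm (v - u).
Proof.
rewrite /enorm -opprB; congr Num.sqrt.
by apply: eq_bigr => i _; rewrite mxE sqrrN.
Qed.

Lemma enorm_le (v : 'rV[R]_m) (d : R) :
  0 <= d -> (forall i, `|v ord0 i| <= d) -> enorm v <= m%:R * d.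
Proof.
move=> d0 vd; have md0 : 0 <= m%:R * d by rewrite mulr_ge0.
rewrite /enorm -(ger0_norm md0) -sqrtr_sqr ler_sqrt ?sqr_ge0 //.
apply: (@le_trans _ _ (\sum_(i < m) d ^+ 2)).
  by apply: ler_sum => i _; rewrite -real_normK ?num_real // lerXn2r ?nnegrE.
rewrite sumr_const card_ord exprMn -natrX mulr_natl.
apply: ler_wpMn2l; first exact: sqr_ge0.
by case: (m) => // k; rewrite expnS leq_pmulr.
Qed.

Variable g : R.

Lemma Lip_ge0 (phi : 'rV[R]_m -> R) : is_holder g phi -> 0 <= Lip g phi.
Proof. by case=> M [M0 HM]; apply: lb_le_inf => [|z []]; first by exists M. Qed.

Lemma holder_with_Lip (phi : 'rV[R]_m -> R) :
  is_holder g phi -> holder_with g (Lip g phi) phi.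
Proof.
case=> M [M0 HM] xb yb.
have [zero|pos] := eqVneq (powR (enorm (xb - yb)) g) 0.
  by have := HM xb yb; rewrite zero !mulr0.
have {}pos : 0 < powR (enorm (xb - yb)) g by rewrite lt_neqAle eq_sym pos powR_ge0.
rewrite -ler_pdivrMr //; apply: lb_le_inf => [|z [_ Hz]]; first by exists M.
by rewrite ler_pdivrMr //; apply: Hz.
Qed.

Hypothesis g0 : 0 < g.

Lemma powR_enorm_lt (rho : R) (v : 'rV[R]_m) : 0 < rho ->
  (forall i, `|v ord0 i| <= powR rho g^-1 / m.+1%:R) -> powR (enorm v) g < rho.
Proof.
move=> rho0 vsmall; have rho_g0 : 0 < powR rho g^-1 by rewrite powR_gt0.
have enorm_lt : enorm v < powR rho g^-1.
  apply: le_lt_trans (enorm_le (divr_ge0 (ltW rho_g0) (ler0n _ _)) vsmall) _.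
  by rewrite mulrA ltr_pdivrMr // mulrC ltr_pM2l // ltr_nat.
have := gt0_ltr_powR g0 (x := enorm v) (y := powR rho g^-1).
rewrite !nnegrE enorm_ge0 powR_ge0 -powRrM mulVf ?gt_eqF // powRr1 ?ltW //.
exact.
Qed.

End holder_geometry.

Section cusps.
Variables (R : realType) (m : nat) (g : R).
Hypothesis g0 : 0 < g.

Lemma ball_pt_lt (x y : pt R m) e : ball x e y ->
  (forall i, `|x.1 ord0 i - y.1 ord0 i| < e) /\ `|x.2 - y.2| < e.
Proof.
case=> [[_ xy1] xy2]; split; last by move: xy2; rewrite -ball_normE.
by move=> i; have := xy1 ord0 i; rewrite -ball_normE.
Qed.

Lemma closure_Omega_le (phi : 'rV[R]_m -> R) (x : pt R m) :
  is_holder g phi -> x \in closure (Omega phi) -> x.2 <= phi x.1.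
Proof.
move=> [M [M0 HM]]; rewrite inE => xcl; rewrite leNgt; apply/negP => gap.
pose e := (x.2 - phi x.1) / 2.
have e0 : 0 < e by rewrite divr_gt0 // subr_gt0.
pose rho := e / (M + 1).
have rho0 : 0 < rho by rewrite divr_gt0 // ltr_wpDl.
have Mrho : M * rho < e by rewrite mulrA ltr_pdivrMr ?ltr_wpDl //; nra.
pose d := Num.min (powR rho g^-1 / m.+1%:R) e.
have d0 : 0 < d by rewrite lt_min e0 andbT divr_gt0 ?powR_gt0.
have [y [Oy /ball_pt_lt [near1 near2]]] := xcl _ (nbhsx_ballx x d d0).
have y1 : powR (enorm (x.1 - y.1)) g < rho.
  apply: powR_enorm_lt => // i; rewrite !mxE; apply/ltW/(lt_le_trans (near1 i)).
  by rewrite ge_min lexx.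
have := HM x.1 y.1; rewrite ler_norml => /andP [+ _].
have : d <= e by rewrite ge_min lexx orbT.
have : M * powR (enorm (x.1 - y.1)) g <= M * rho by rewrite ler_wpM2l // ltW.
move: near2 Oy; rewrite /Omega /= ltr_norml => /andP [? ?] ? ? ? ?.
have : e * 2 = x.2 - phi x.1 by rewrite /e mulfVK ?pnatr_eq0.
lra.
Qed.

Lemma cusp_sub_Omega (phi : 'rV[R]_m -> R) (M : R) (x : pt R m) (h : R) :
  holder_with g M phi -> x.2 <= phi x.1 -> cusp g x h M `<=` Omega phi.
Proof.
move=> HM xle y [_]; rewrite /Omega /= enormB.
have := HM x.1 y.1; rewrite ler_norml => /andP [_]; lra.
Qed.

Definition cusp_box_side (L r : R) : R :=
  powR (r / (4 * (L + 1))) g^-1 / m.+1%:R.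

Definition cusp_box_lo (x : pt R m) (L r : R) : pt R m :=
  (x.1 - const_mx (cusp_box_side L r), x.2 - r / 2).

Definition cusp_box_hi (x : pt R m) (L r : R) : pt R m :=
  (x.1 + const_mx (cusp_box_side L r), x.2 - r / 4).

Definition cusp_box_const (L : R) : R :=
  2 ^+ m * powR (4 * (L + 1))^-1 (m%:R / g) / m.+1%:R ^+ m / 4.

Lemma cusp_box_const_gt0 L : 0 <= L -> 0 < cusp_box_const L.
Proof.
move=> L0; rewrite !divr_gt0 ?mulr_gt0 ?exprn_gt0 ?powR_gt0 //.
by rewrite invr_gt0 mulr_gt0 // ltr_wpDl.
Qed.

Lemma cusp_box_sub (x : pt R m) (L r : R) : 0 <= L -> 0 < r ->
  box (cusp_box_lo x L r) (cusp_box_hi x L r) `<=` cusp g x r L `&` Bg g x r.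
Proof.
move=> L0 r0 y [y1 /andP [y2lo y2hi]]; move: y2lo y2hi => /= y2lo y2hi.
pose rho := r / (4 * (L + 1)).
have rho0 : 0 < rho by rewrite divr_gt0 // mulr_gt0 // ltr_wpDl.
have rhoL : rho * (L + 1) = r / 4.
  have L1 : L + 1 != 0 by rewrite gt_eqF // ltr_wpDl.
  by rewrite /rho; field.
have close : powR (enorm (x.1 - y.1)) g < rho.
  apply: powR_enorm_lt => // i; move: (y1 i); rewrite /= !mxE => /andP [lo hi].
  by rewrite ler_norml -/(cusp_box_side L r); apply/andP; split; lra.
have Lclose : L * powR (enorm (x.1 - y.1)) g <= L * rho by rewrite ler_wpM2l // ltW.
have := powR_ge0 (enorm (x.1 - y.1)) g.
split; first by split=> /=; [lra | rewrite enormB; nra].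
by split=> /=; [nra | rewrite ltr_norml; apply/andP; split; lra].
Qed.

Lemma box_vol_cusp_box (x : pt R m) (L r : R) : 0 <= L -> 0 < r ->
  box_vol (cusp_box_lo x L r) (cusp_box_hi x L r) =
  cusp_box_const L * powR r (m%:R / g + 1).
Proof.
move=> L0 r0.
have k0 : 0 < (4 * (L + 1))^-1 by rewrite invr_gt0 mulr_gt0 // ltr_wpDl.
have d0 : 0 < cusp_box_side L r by rewrite divr_gt0 ?powR_gt0 // mulr_gt0.
rewrite /box_vol /= (eq_bigr (fun=> 2 * cusp_box_side L r)); last first.
  by move=> i _; rewrite !mxE max_r; [ring|nra].
rewrite prodr_const card_ord max_r; last by lra.
rewrite powRD ?(gt_eqF r0) ?implybT // powRr1 ?ltW //.
rewrite /cusp_box_const /cusp_box_side.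
rewrite exprMn expr_div_n -(powR_mulrn _ (powR_ge0 _ _)) -powRrM powRM ?ltW //.
by rewrite [g^-1 * _]mulrC; field; rewrite expf_neq0 // pnatr_eq0.
Qed.

End cusps.

Theorem lemma2p1 (R : realType) (m : nat) (hm : (1 <= m)%N) (g : R)
    (hg : 0 < g <= 1) :
  (forall phi : 'rV[R]_m -> R, is_holder g phi ->
     forall (x : pt R m) (h : R), x \in closure (Omega phi) -> 0 < h ->
       cusp g x h (Lip g phi) `<=` Omega phi) /\
  (forall L : R, exists c : R, 0 < c /\
     forall phi : 'rV[R]_m -> R, is_holder g phi -> Lip g phi = L ->
       forall (x : pt R m) (r : R), x \in closure (Omega phi) -> 0 < r ->
         ((c * powR r (m%:R / g + 1))%:E <= leb (Bg g x r `&` Omega phi))%E).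
Proof.
have g0 : 0 < g by case/andP: hg.
have cusp_in_Omega (phi : 'rV[R]_m -> R) (x : pt R m) h :
    is_holder g phi -> x \in closure (Omega phi) ->
    cusp g x h (Lip g phi) `<=` Omega phi.
  move=> holder xcl.
  exact: cusp_sub_Omega (holder_with_Lip holder) (closure_Omega_le g0 holder xcl).
split=> [phi holder x h xcl _|L]; first exact: cusp_in_Omega.
exists (cusp_box_const m g `|L|); split=> [|phi holder LipL x r xcl r0].
  exact/cusp_box_const_gt0/normr_ge0.
have L0 : 0 <= L by rewrite -LipL; exact: Lip_ge0.
rewrite ger0_norm // -(box_vol_cusp_box g x L0 r0).
apply: le_ereal_inf_tmp => _ [a [b [cover ->]]].
apply: box_vol_le_cover; apply: subset_trans cover.
apply: subset_trans (cusp_box_sub g0 L0 r0) _.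
move=> y [y_cusp y_ball]; split=> //; rewrite -LipL in y_cusp.
exact: cusp_in_Omega y_cusp.
Qed.
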